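(* Let $\mu\in\mathbb{C}$, $r(z)\in\mathbb{C}(z)^\times$ and let $(W,\rho_r)=(\mathbb{C}(z),\rho^{(\mu)}_r)$. There exists a polynomial Casimir representation of rank $1$, $(V,\rho')$, such that $(W,\rho_r)\cong F_{\mathrm{rat}}(V,\rho')$ if and only if there exist $\gamma\in\mathbb{C}^\times$, $\alpha_1,\dots,\alpha_n\in\mathbb{C}$, $a_1,\dots,a_n\in\mathbb{Z}$ such that, writing $\pi_\mu(z)=\alpha_\mu(z)\beta_\mu(z)$ as a product of monic polynomials of degree $1$, $r(z)$ is of one of the four types: I) $r(z)=\gamma\,\pi_\mu(z+1)\prod_{i=1}^n\frac{z+a_i-\alpha_i}{z-\alpha_i}$; II) $r(z)=\gamma\,\alpha_\mu(z+1)\prod_{i=1}^n\frac{z+a_i-\alpha_i}{z-\alpha_i}$; III) $r(z)=\gamma\,\beta_\mu(z+1)\prod_{i=1}^n\frac{z+a_i-\alpha_i}{z-\alpha_i}$; IV) $r(z)=\gamma\prod_{i=1}^n\frac{z+a_i-\alpha_i}{z-\alpha_i}$.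
   Context: $\mathfrak{sl}(2)$ has basis $L_{-1}=f$, $L_0=-\tfrac12 h$, $L_1=-e$ for a Chevalley basis $e,f,h$. Every $\mathfrak{sl}(2)$-module $(V,\rho)$ is a $\mathbb{C}[z]$-module via $z\cdot v=\rho(L_0)v$; Casimir operator $C_\rho=\rho(L_0)(\rho(L_0)-1)-\rho(L_{-1})\rho(L_1)$, and $V$ is Casimir if $C_\rho$ is a scalar. A polynomial Casimir representation of rank $1$ is a Casimir $\mathfrak{sl}(2)$-module which, as a $\mathbb{C}[z]$-module, is free of rank $1$. $\nabla g(z)=g(z+1)$ on $\mathbb{C}(z)$; $\pi_\mu(z)=z(z-1)-\mu$. For $r\in\mathbb{C}(z)^\times$, $\rho^{(\mu)}_r$ is the representation on $\mathbb{C}(z)$ with $\rho^{(\mu)}_r(L_{-1})=\frac{\pi_\mu(z)}{r(z-1)}\circ\nabla^{-1}$, $\rho^{(\mu)}_r(L_0)=z$, $\rho^{(\mu)}_r(L_1)=r(z)\circ\nabla$. The rationalization of a torsion free finite rank $(V,\rho)$ is $F_{\mathrm{rat}}(V,\rho)=(S^{-1}V,\rho_{\mathrm{rat}})$, $S=\mathbb{C}[z]\setminus\{0\}$, with $\rho_{\mathrm{rat}}(L_{\pm1})(v/p(z))=\rho(L_{\pm1})(v)/p(z\pm1)$, $\rho_{\mathrm{rat}}(L_0)(v/p)=zv/p$. *)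

(* C(z) is {fraction {poly C}}; the complex numbers are R[i]
   for R : realType (mathcomp-real-closed's complex numbers over the reals). *)
From HB Require Import structures.
From mathcomp Require Import all_boot all_order all_algebra.
From mathcomp Require Import generic_quotient fraction.
From mathcomp Require Import boolp reals complex.
From Stdlib Require Import Relation_Operators.

Set Implicit Arguments.
Unset Strict Implicit.
Unset Printing Implicit Defensive.

Import Order.TTheory GRing.Theory Num.Theory.
Local Open Scope ring_scope.
Local Open Scope quotient_scope.

Notation "x %:F" := (@FracField.tofrac _ x).

Section Sl2Defs.
Variable C : fieldType.

Definition pimu (mu : C) : {poly C} := 'X * ('X - 1) - mu%:P.

(** shift g(z) |-> g(z + c) on C(z) (c = 1 : nabla, c = -1 : nabla^-1) *)
Definition fshift (c : C) (f : {fraction {poly C}}) : {fraction {poly C}} :=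
  let x := repr f in
  (\n_x \Po ('X + c%:P))%:F / (\d_x \Po ('X + c%:P))%:F.

(** The representation rho^(mu)_r on W = C(z); C acts on W by multiplication
    by constants. *)
Definition Wscale (c : C) (f : {fraction {poly C}}) := (c%:P)%:F * f.
Definition Wm (mu : C) (r f : {fraction {poly C}}) :=
  (pimu mu)%:F / fshift (-1) r * fshift (-1) f.
Definition W0 (f : {fraction {poly C}}) := ('X : {poly C})%:F * f.
Definition Wp (r f : {fraction {poly C}}) := r * fshift 1 f.

Variable V : lmodType C.

(** C[z]-module structure on V : p(z) . v = p(rho(L_0)) v *)
Definition zact (L0 : V -> V) (p : {poly C}) (v : V) : V :=
  \sum_(i < size p) p`_i *: iter i L0 v.

(** (V, rho) is an sl(2)-module: rho(L_m) are linear maps satisfying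
    [L_m, L_n] = (m - n) L_(m+n). *)
Definition is_sl2_rep (Lm L0 Lp : {linear V -> V}) : Prop :=
  [/\ forall v, Lp (Lm v) - Lm (Lp v) = L0 v *+ 2,
      forall v, L0 (Lp v) - Lp (L0 v) = - Lp v &
      forall v, L0 (Lm v) - Lm (L0 v) = Lm v].

Definition casimir_op (Lm L0 Lp : V -> V) (v : V) : V :=
  L0 (L0 v - v) - Lm (Lp v).

Definition is_casimir (Lm L0 Lp : V -> V) : Prop :=
  exists c : C, forall v, casimir_op Lm L0 Lp v = c *: v.

Definition free_rank1 (L0 : V -> V) : Prop :=
  exists v0 : V, bijective (fun p : {poly C} => zact L0 p v0).

Definition poly_casimir_rank1 (Lm L0 Lp : {linear V -> V}) : Prop :=
  [/\ is_sl2_rep Lm L0 Lp, is_casimir Lm L0 Lp & free_rank1 L0].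

(** Localization S^-1 V, S = C[z] \ {0}: pairs (v, p) with p != 0 modulo
    (v,p) ~ (w,q) iff s (q v - p w) = 0 for some s != 0
    (closed under equivalence, which changes nothing since this is already
    an equivalence relation). *)
Definition npoly := {p : {poly C} | p != 0}.
Definition npoly1 : npoly := exist _ 1 (oner_neq0 _).
Definition lpair := (V * npoly)%type.

Section Loc.
Variable L0 : V -> V.

Definition lrel0 (x y : lpair) : Prop :=
  exists s : {poly C}, s != 0 /\
    zact L0 s (zact L0 (val y.2) x.1 - zact L0 (val x.2) y.1) = 0.

Definition lrel (x y : lpair) : bool :=
  `[< clos_refl_sym_trans lpair lrel0 x y >].

Lemma lrel_refl : reflexive lrel.
Proof. by move=> x; apply/asboolP; apply: rst_refl. Qed.

Lemma lrel_sym : symmetric lrel.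
Proof.
by move=> x y; apply/asboolP/asboolP => H; apply: rst_sym.
Qed.

Lemma lrel_trans : transitive lrel.
Proof.
move=> y x z /asboolP Hxy /asboolP Hyz; apply/asboolP.
exact: rst_trans Hxy Hyz.
Qed.

Canonical lrel_equiv := EquivRel lrel lrel_refl lrel_sym lrel_trans.

Definition loc := {eq_quot lrel}.

End Loc.

Section Rat.
Variables (Lm L0 Lp : V -> V).
Local Notation Q := (loc L0).

Definition mkpair (v : V) (p : {poly C}) : lpair := (v, insubd npoly1 p).

Definition loc_add (x y : Q) : Q :=
  let a := repr x in let b := repr y in
  \pi_Q (mkpair (zact L0 (val b.2) a.1 + zact L0 (val a.2) b.1)
                (val a.2 * val b.2)).
Definition loc_scale (c : C) (x : Q) : Q :=
  let a := repr x in \pi_Q (c *: a.1, a.2).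

Definition locm (x : Q) : Q :=
  let a := repr x in \pi_Q (mkpair (Lm a.1) (val a.2 \Po ('X - 1))).
Definition loc0 (x : Q) : Q :=
  let a := repr x in \pi_Q (L0 a.1, a.2).
Definition locp (x : Q) : Q :=
  let a := repr x in \pi_Q (mkpair (Lp a.1) (val a.2 \Po ('X + 1))).

Definition iso_to_rat (mu : C) (r : {fraction {poly C}}) : Prop :=
  exists phi : {fraction {poly C}} -> Q,
    bijective phi /\
    [/\ forall f g, phi (f + g) = loc_add (phi f) (phi g),
        forall c f, phi (Wscale c f) = loc_scale c (phi f),
        forall f, phi (Wm mu r f) = locm (phi f),
        forall f, phi (W0 f) = loc0 (phi f) &
        forall f, phi (Wp r f) = locp (phi f)].

End Rat.
End Sl2Defs.

(* A free rank one module V = C[z] v0 is described by the polynomials a, b with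
   L_1 v0 = a v0 and L_-1 v0 = b v0: the commutation relations with L_0 give
   L_(+-1) (p v0) = p(z +- 1) L_(+-1) v0, so the rationalisation of V is C(z)
   with L_1 = a nabla and L_-1 = b nabla^-1.  An sl(2)-isomorphism from
   (C(z), rho_r) to it commutes with multiplication by C[z], hence is
   multiplication by some h != 0; comparing L_1 gives r = a nabla h / h and
   comparing L_-1 gives pi_mu(z) = b(z) a(z - 1).  Conversely every such pair
   (a, h) is realised on C[z] itself, whose Casimir is mu.  So r is admissible
   iff r = A(z + 1) nabla h / h with A | pi_mu.  Up to scalars the divisors of
   pi_mu = alpha_mu beta_mu are pi_mu, alpha_mu, beta_mu and 1, and over C the
   quotients nabla h / h are exactly the products of factors
   (z + a - alpha) / (z - alpha) with a in Z: nabla(z - alpha) / (z - alpha) is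
   such a factor, and (z + m - alpha) / (z - alpha) = nabla h / h for the rising
   factorial h = (z - alpha)(z - alpha + 1) ... (z - alpha + m - 1). *)

From HB Require Import structures.
From mathcomp Require Import all_boot all_order all_algebra.
From mathcomp Require Import generic_quotient fraction.
From mathcomp Require Import boolp reals complex.
From Stdlib Require Import Relation_Operators.
From mathcomp Require Import ring.

Set Implicit Arguments.
Unset Strict Implicit.
Unset Printing Implicit Defensive.

Import Order.TTheory GRing.Theory Num.Theory.
Local Open Scope ring_scope.
Local Open Scope quotient_scope.

Section FracNumDen.
Variable R : idomainType.
Local Notation F := {fraction R}.

Lemma pi_ratio (x : {ratio R}) : \pi_F x = (\n_x)%:F / (\d_x)%:F.
Proof.
have d0 : (\d_x)%:F != 0 :> F by rewrite tofrac_eq0 denom_ratioP.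
apply: (mulIf d0); rewrite divfK //.
have tofracE (p : R) : p%:F = \pi_F (Ratio p 1) by rewrite /FracField.tofrac -lock.
rewrite !tofracE -[_ * _]FracField.pi_mul; apply/eqmodP.
rewrite /= FracField.equivfE /FracField.mulf !numden_Ratio ?mulf_neq0 ?oner_neq0
  ?denom_ratioP //.
by rewrite !mulr1 mulrC.
Qed.

Lemma frac_numden (f : F) : f = (\n_(repr f))%:F / (\d_(repr f))%:F.
Proof. by rewrite -pi_ratio reprK. Qed.

Lemma frac_exists (f : F) : exists p q, q != 0 /\ f = p%:F / q%:F.
Proof. by exists (\n_(repr f)), (\d_(repr f)); rewrite -frac_numden denom_ratioP. Qed.

Lemma eq_tofrac_div (a b c d : R) : b != 0 -> d != 0 ->
  (a%:F / b%:F = c%:F / d%:F :> F) <-> a * d = c * b.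
Proof.
move=> b0 d0; split=> [/eqP | E]; last first.
  by apply/eqP; rewrite eqr_div ?tofrac_eq0 // -!tofracM E.
by rewrite eqr_div ?tofrac_eq0 // -!tofracM tofrac_eq => /eqP.
Qed.
End FracNumDen.

Section Shift.
Variable K : fieldType.
Local Notation F := {fraction {poly K}}.
Implicit Types (c : K) (p q : {poly K}) (f g : F).

Definition pshift c p := p \Po ('X + c%:P).

Lemma pshift_eq0 c p : (pshift c p == 0) = (p == 0).
Proof. by rewrite -!size_poly_eq0 size_comp_poly2 // size_XaddC. Qed.

Lemma pshiftD c p q : pshift c (p + q) = pshift c p + pshift c q.
Proof. exact: comp_polyD. Qed.

Lemma pshiftM c p q : pshift c (p * q) = pshift c p * pshift c q.
Proof. exact: comp_polyM. Qed.

Lemma pshiftC c k : pshift c k%:P = k%:P.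
Proof. exact: comp_polyC. Qed.

Lemma pshiftX c : pshift c 'X = 'X + c%:P.
Proof. exact: comp_polyX. Qed.

Lemma pshift0 p : pshift 0 p = p.
Proof. by rewrite /pshift addr0 comp_polyXr. Qed.

Lemma pshift1E p : pshift 1 p = p \Po ('X + 1).
Proof. by rewrite /pshift polyC1. Qed.

Lemma pshiftK c : cancel (pshift c) (pshift (- c)).
Proof.
move=> p; rewrite /pshift -comp_polyA comp_polyD comp_polyX comp_polyC.
by rewrite -addrA -polyCD addNr addr0 comp_polyXr.
Qed.

Lemma pshiftNK c : cancel (pshift (- c)) (pshift c).
Proof. by move=> p; have := pshiftK (- c) p; rewrite opprK. Qed.

Lemma pshift_XaddC c d : pshift c ('X + d%:P) = 'X + (d + c)%:P.
Proof. by rewrite pshiftD pshiftX pshiftC -addrA -polyCD (addrC c). Qed.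

Lemma fshift_frac c p q : q != 0 ->
  fshift c (p%:F / q%:F) = (pshift c p)%:F / (pshift c q)%:F.
Proof.
move=> q0; rewrite /fshift.
have d0 := denom_ratioP (repr (p%:F / q%:F)).
have /(eq_tofrac_div _ _ d0 q0) E := esym (frac_numden (p%:F / q%:F)).
by apply/eq_tofrac_div; rewrite ?pshift_eq0 // -!pshiftM E.
Qed.

Lemma fshift_tofrac c p : fshift c p%:F = (pshift c p)%:F.
Proof.
by have := fshift_frac c p (oner_neq0 _); rewrite tofrac1 !divr1 pshiftC tofrac1 divr1.
Qed.

Lemma fshift0 c : fshift c 0 = 0.
Proof. by rewrite -tofrac0 fshift_tofrac pshiftC. Qed.

Lemma fshift1 c : fshift c 1 = 1.
Proof. by rewrite -tofrac1 fshift_tofrac pshiftC. Qed.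

Lemma fshiftM c f g : fshift c (f * g) = fshift c f * fshift c g.
Proof.
have [p [q [q0 ->]]] := frac_exists f; have [p' [q' [q'0 ->]]] := frac_exists g.
by rewrite mulf_div -!tofracM !fshift_frac ?mulf_neq0 // !pshiftM mulf_div -!tofracM.
Qed.

Lemma fshiftV c f : fshift c f^-1 = (fshift c f)^-1.
Proof.
have [p [q [q0 ->]]] := frac_exists f.
have [->|p0] := eqVneq p 0; first by rewrite tofrac0 mul0r invr0 fshift0 invr0.
by rewrite invf_div !fshift_frac // invf_div.
Qed.

Lemma fshiftK c : cancel (fshift c) (fshift (- c)).
Proof.
move=> f; have [p [q [q0 ->]]] := frac_exists f.
by rewrite (fshift_frac c) // fshift_frac ?pshift_eq0 // !pshiftK.
Qed.

Lemma fshift_eq0 c f : (fshift c f == 0) = (f == 0).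
Proof.
apply/eqP/eqP => [E|->]; last exact: fshift0.
by rewrite -(fshiftK c f) E fshift0.
Qed.
End Shift.

Lemma size_pimu (K : fieldType) (mu : K) : size (pimu mu) = 3.
Proof.
have sX2 : size ('X * ('X - 1) : {poly K}) = 3.
  by rewrite -polyC1 size_mul ?polyX_eq0 ?polyXsubC_eq0 // size_polyX size_XsubC.
by rewrite /pimu size_polyDl sX2 // size_polyN (leq_ltn_trans (size_polyC_leq1 _)).
Qed.

Lemma pimu_neq0 (K : fieldType) (mu : K) : pimu mu != 0.
Proof. by rewrite -size_poly_eq0 size_pimu. Qed.

Lemma pimu_monic (K : fieldType) (mu : K) : pimu mu \is monic.
Proof. by rewrite monicE lead_coefE size_pimu /pimu !coefE /= !subr0. Qed.

Lemma pshift1_pimu (K : fieldType) (mu : K) : pshift 1 (pimu mu) = pimu mu + 'X *+ 2.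
Proof.
rewrite /pimu /pshift -polyC1 comp_polyB comp_polyM comp_polyX comp_polyB comp_polyX.
by rewrite !comp_polyC; ring.
Qed.

Lemma pimu_factor (K : closedFieldType) (mu : K) :
  exists al be : K, pimu mu = ('X - al%:P) * ('X - be%:P).
Proof.
have [rs pimuE] := closed_field_poly_normal (pimu mu).
have := size_pimu mu; rewrite pimuE (monicP (pimu_monic mu)) scale1r size_prod_XsubC.
by case: rs pimuE => [|al [|be []]] // pimuE _; exists al, be; rewrite big_cons big_seq1.
Qed.

Lemma dvdp_XsubC2 (K : fieldType) (al be : K) (q A : {poly K}) :
    q = ('X - al%:P) * ('X - be%:P) -> A %| q ->
  exists2 g : K, g != 0 &
    [\/ A = g%:P * q, A = g%:P * ('X - al%:P), A = g%:P * ('X - be%:P) | A = g%:P].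
Proof.
move=> -> dvdA.
have /dvdp_prod_XsubC[m /eqpf_eq[g g0 ->]] : A %| \prod_(z <- [:: al; be]) ('X - z%:P).
  by rewrite big_cons big_seq1.
exists g => //; rewrite -mul_polyC.
(* the seven cases select [::], [:: al], [:: al; be], [:: al], [::], [:: be], [::] *)
case: m => [|[] [|[] m]]; rewrite /= ?mask0 ?big_cons ?big_nil ?mulr1.
- by apply: Or44.
- by apply: Or42.
- by apply: Or41.
- by apply: Or42.
- by apply: Or44.
- by apply: Or43.
- by apply: Or44.
Qed.

Section ZAction.
Variables (K : fieldType) (V : lmodType K) (L0 : {linear V -> V}).
Implicit Types (c : K) (p q : {poly K}) (v w : V).

Lemma iter_linearD i v w : iter i L0 (v + w) = iter i L0 v + iter i L0 w.
Proof. by elim: i => //= i ->; rewrite linearD. Qed.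

Lemma iter_linearZ i c v : iter i L0 (c *: v) = c *: iter i L0 v.
Proof. by elim: i => //= i ->; rewrite linearZ. Qed.

Lemma zact_widen n p v : (size p <= n)%N ->
  zact L0 p v = \sum_(i < n) p`_i *: iter i L0 v.
Proof.
move=> le_p_n; rewrite /zact (big_ord_widen n (fun i => p`_i *: iter i L0 v) le_p_n).
rewrite big_mkcond; apply: eq_bigr => i _.
by case: ltnP => // le_p_i; rewrite nth_default // scale0r.
Qed.

Lemma zact0r v : zact L0 0 v = 0.
Proof. by rewrite /zact size_poly0 big_ord0. Qed.

Lemma zactC c v : zact L0 c%:P v = c *: v.
Proof. by rewrite (zact_widen (n := 1)) ?size_polyC ?leq_b1 // big_ord1 coefC. Qed.

Lemma zact1r v : zact L0 1 v = v.
Proof. by rewrite -polyC1 zactC scale1r. Qed.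

Lemma zactDl p q v : zact L0 (p + q) v = zact L0 p v + zact L0 q v.
Proof.
pose n := maxn (size p) (size q).
rewrite !(zact_widen (n := n)) ?leq_maxl ?leq_maxr ?size_polyD //.
by rewrite -big_split; apply: eq_bigr => i _; rewrite coefD scalerDl.
Qed.

Lemma zactZl c p v : zact L0 (c *: p) v = c *: zact L0 p v.
Proof.
rewrite !(zact_widen (n := size p)) ?size_scale_leq // scaler_sumr.
by apply: eq_bigr => i _; rewrite coefZ scalerA.
Qed.

Lemma zactBl p q v : zact L0 (p - q) v = zact L0 p v - zact L0 q v.
Proof. by rewrite zactDl -[- q]scaleN1r zactZl scaleN1r. Qed.

Lemma zactDr p v w : zact L0 p (v + w) = zact L0 p v + zact L0 p w.
Proof.
by rewrite /zact -big_split; apply: eq_bigr => i _; rewrite iter_linearD scalerDr.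
Qed.

Lemma zactZr p c v : zact L0 p (c *: v) = c *: zact L0 p v.
Proof.
rewrite /zact scaler_sumr; apply: eq_bigr => i _.
by rewrite iter_linearZ !scalerA mulrC.
Qed.

Lemma zactMX p v : zact L0 (p * 'X) v = L0 (zact L0 p v).
Proof.
rewrite (zact_widen (n := (size p).+1)); last first.
  by rewrite (leq_trans (size_polyMleq _ _)) // size_polyX addn2.
rewrite big_ord_recl coefMX /= scale0r add0r /zact linear_sum.
by apply: eq_bigr => i _; rewrite coefMX /= linearZ.
Qed.

Lemma zactMX_L0 p v : zact L0 (p * 'X) v = zact L0 p (L0 v).
Proof.
rewrite (zact_widen (n := (size p).+1)); last first.
  by rewrite (leq_trans (size_polyMleq _ _)) // size_polyX addn2.
rewrite big_ord_recl coefMX /= scale0r add0r /zact.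
by apply: eq_bigr => i _; rewrite coefMX /= -iterS iterSr.
Qed.

Lemma zactA p q v : zact L0 (p * q) v = zact L0 p (zact L0 q v).
Proof.
elim/poly_ind: p q v => [|p c IHp] q v; first by rewrite mul0r !zact0r.
rewrite mulrDl -mulrA (mulrC 'X q) zactDl IHp zactMX mul_polyC zactZl.
by rewrite zactDl zactC zactMX_L0.
Qed.

Lemma zact_intertwine (T : {linear V -> V}) c :
    (forall v, T (L0 v) = L0 (T v) + c *: T v) ->
  forall p v, T (zact L0 p v) = zact L0 (pshift c p) (T v).
Proof.
move=> TL0 p; elim/poly_ind: p => [|p c0 IHp] v.
  by rewrite zact0r /pshift comp_poly0 zact0r linear0.
rewrite zactDl zactC zactMX_L0 linearD IHp TL0 linearZ.
rewrite pshiftD pshiftM pshiftC pshiftX zactDl zactC mulrDr zactDl zactMX_L0.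
by rewrite zactDr zactZr mulrC mul_polyC zactZl.
Qed.
End ZAction.

Section LocFrac.
Variables (K : fieldType) (V : lmodType K) (L0 : {linear V -> V}) (v0 : V).
Variable coord : V -> {poly K}.
Hypotheses (coordK : cancel (fun p => zact L0 p v0) coord)
           (coordVK : cancel coord (fun p => zact L0 p v0)).
Local Notation F := {fraction {poly K}}.
Local Notation Q := (loc L0).

Lemma coord_zact p v : coord (zact L0 p v) = p * coord v.
Proof. by rewrite -{1}(coordVK v) -zactA coordK. Qed.

Lemma coord0 : coord 0 = 0.
Proof. by rewrite -(zact0r L0 v0) coordK. Qed.

Lemma coordD v w : coord (v + w) = coord v + coord w.
Proof. by rewrite -{1}(coordVK v) -{1}(coordVK w) -zactDl coordK. Qed.

Lemma coordB v w : coord (v - w) = coord v - coord w.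
Proof. by rewrite -{1}(coordVK v) -{1}(coordVK w) -zactBl coordK. Qed.

Definition pair_frac (x : lpair V) : F := (coord x.1)%:F / (val x.2)%:F.

Lemma pair_frac_mkpair v q : q != 0 -> pair_frac (mkpair v q) = (coord v)%:F / q%:F.
Proof. by move=> q0; rewrite /pair_frac /= val_insubd q0. Qed.

Lemma lrelE (x y : lpair V) : lrel L0 x y <-> pair_frac x = pair_frac y.
Proof.
have x0 := valP x.2; have y0 := valP y.2.
split=> [/asboolP | Exy]; last first.
  apply/asboolP/rst_step; exists 1; split; first exact: oner_neq0.
  move/(eq_tofrac_div _ _ x0 y0): Exy => Exy.
  apply: (can_inj coordVK); rewrite zact1r coord0 coordB !coord_zact.
  by rewrite mulrC Exy mulrC subrr.
elim=> {x y x0 y0} [x y [s [s0 Exy]]|//|//|x y z _ -> _ -> //].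
have /eqP : coord (zact L0 s (zact L0 (val y.2) x.1 - zact L0 (val x.2) y.1)) = 0.
  by rewrite Exy coord0.
rewrite coord_zact coordB !coord_zact mulf_eq0 (negbTE s0) subr_eq0 => /eqP Exy'.
by apply/eq_tofrac_div; rewrite ?(valP x.2) ?(valP y.2) // mulrC Exy' mulrC.
Qed.

Definition loc_frac (x : Q) : F := pair_frac (repr x).

Definition frac_loc (f : F) : Q :=
  \pi_Q (mkpair (zact L0 (\n_(repr f)) v0) (\d_(repr f))).

Lemma loc_frac_pi (x : lpair V) : loc_frac (\pi_Q x) = pair_frac x.
Proof. by apply/lrelE; apply/eqmodP; rewrite reprK. Qed.

Lemma loc_frac_inj : injective loc_frac.
Proof. by move=> x y /lrelE Exy; rewrite -[x]reprK -[y]reprK; apply/eqmodP. Qed.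

Lemma frac_locK : cancel frac_loc loc_frac.
Proof.
move=> f; rewrite loc_frac_pi pair_frac_mkpair ?denom_ratioP // coordK.
by rewrite -frac_numden.
Qed.

Lemma loc_frac_add (x y : Q) : loc_frac (loc_add x y) = loc_frac x + loc_frac y.
Proof.
have x0 := valP (repr x).2; have y0 := valP (repr y).2.
rewrite loc_frac_pi pair_frac_mkpair ?mulf_neq0 // coordD !coord_zact.
rewrite addf_div ?tofrac_eq0 // -!tofracM -tofracD.
by rewrite [_ * coord _]mulrC [X in _ + X]mulrC.
Qed.

Lemma loc_frac_scale c (x : Q) : loc_frac (loc_scale c x) = (c%:P)%:F * loc_frac x.
Proof.
rewrite loc_frac_pi /pair_frac /= -[c *: _](zactC L0) coord_zact.
by rewrite tofracM mulrA.
Qed.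

Lemma loc_frac_loc0 (x : Q) : loc_frac (loc0 x) = ('X : {poly K})%:F * loc_frac x.
Proof.
rewrite loc_frac_pi /pair_frac /= -[L0 _](zact1r L0) -zactMX_L0 mul1r coord_zact.
by rewrite tofracM mulrA.
Qed.

Lemma loc_frac_shift (T : {linear V -> V}) c (x : Q) :
    (forall v, T (L0 v) = L0 (T v) + c *: T v) ->
  loc_frac (\pi_Q (mkpair (T (repr x).1) (val (repr x).2 \Po ('X + c%:P))))
    = (coord (T v0))%:F * fshift c (loc_frac x).
Proof.
move=> TL0; have x0 := valP (repr x).2.
rewrite loc_frac_pi pair_frac_mkpair -?/(pshift _ _) ?pshift_eq0 //.
rewrite /loc_frac /pair_frac fshift_frac // -{1}(coordVK (repr x).1).
by rewrite (zact_intertwine TL0) coord_zact tofracM mulrA [_ * (coord _)%:F]mulrC.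
Qed.

Lemma loc_frac_locp (Lp : {linear V -> V}) (x : Q) :
    (forall v, L0 (Lp v) - Lp (L0 v) = - Lp v) ->
  loc_frac (locp Lp x) = (coord (Lp v0))%:F * fshift 1 (loc_frac x).
Proof.
move=> LpL0; rewrite /locp -polyC1 loc_frac_shift // => v.
by rewrite scale1r -[Lp (L0 v)](subKr (L0 (Lp v))) LpL0 opprK.
Qed.

Lemma loc_frac_locm (Lm : {linear V -> V}) (x : Q) :
    (forall v, L0 (Lm v) - Lm (L0 v) = Lm v) ->
  loc_frac (locm Lm x) = (coord (Lm v0))%:F * fshift (-1) (loc_frac x).
Proof.
move=> LmL0; have XB1 : 'X - 1 = 'X + (-1)%:P :> {poly K} by rewrite polyCN polyC1.
rewrite /locm XB1 loc_frac_shift // => v.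
by rewrite scaleN1r -[Lm (L0 v)](subKr (L0 (Lm v))) LmL0.
Qed.
End LocFrac.

Section FracLinear.
Variable K : fieldType.
Local Notation F := {fraction {poly K}}.

Lemma frac_linear_mulE (chi : F -> F) :
    {morph chi : f g / f + g} ->
    (forall c f, chi ((c%:P)%:F * f) = (c%:P)%:F * chi f) ->
    (forall f, chi (('X : {poly K})%:F * f) = 'X%:F * chi f) ->
  forall f, chi f = f * chi 1.
Proof.
move=> chiD chiC chiX.
have chi0 : chi 0 = 0 by apply: (addrI (chi 0)); rewrite -chiD !addr0.
have chi_poly p f : chi (p%:F * f) = p%:F * chi f.
  elim/poly_ind: p f => [|p c IHp] f; first by rewrite tofrac0 !mul0r chi0.
  by rewrite tofracD tofracM !mulrDl chiD -!mulrA IHp chiX chiC.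
move=> f; have [p [q [q0 ->]]] := frac_exists f.
have q0F : q%:F != 0 :> F by rewrite tofrac_eq0.
have qK g : q%:F * (g / q%:F) = g by rewrite mulrC divfK.
apply: (mulfI q0F); rewrite -chi_poly qK mulrA qK.
by rewrite -{1}[p%:F]mulr1 chi_poly.
Qed.

Lemma shift_factorization (p a b : {poly K}) (r k : F) : r != 0 -> k != 0 ->
    r * k = a%:F * fshift 1 k -> p%:F / fshift (-1) r * k = b%:F * fshift (-1) k ->
  p = b * pshift (-1) a.
Proof.
move=> r0 k0 Ea Eb.
have r'0 : fshift (-1) r != 0 by rewrite fshift_eq0 r0.
have Ea' : fshift (-1) r * fshift (-1) k = (pshift (-1) a)%:F * k.
  by rewrite -fshiftM Ea fshiftM fshift_tofrac fshiftK.
apply/eqP; rewrite -tofrac_eq tofracM; apply/eqP; apply: (mulIf k0).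
by rewrite -mulrA -Ea' mulrCA -Eb mulrCA mulrA divfK.
Qed.
End FracLinear.

(* [r] is of this form exactly when rho_r is the rationalisation of the rank one
   module C[z] with L_1 = A(z+1) nabla and L_-1 = (pi_mu / A)(z) nabla^-1,
   transported to C(z) by multiplication by [h]. *)
Definition polynomial_form (K : fieldType) (mu : K) (r : {fraction {poly K}}) :=
  exists (A : {poly K}) (h : {fraction {poly K}}),
    [/\ A %| pimu mu, h != 0 & r = (pshift 1 A)%:F * (fshift 1 h / h)].

Lemma polynomial_form_of_rank1 (K : fieldType) (V : lmodType K)
    (Lm L0 Lp : {linear V -> V}) (mu : K) (r : {fraction {poly K}}) :
  r != 0 -> poly_casimir_rank1 Lm L0 Lp -> iso_to_rat Lm L0 Lp mu r ->
  polynomial_form mu r.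
Proof.
move=> r0 [[_ LpL0 LmL0] _ [v0 [coord coordK coordVK]]].
case=> phi [[? phiK _] [phiD phiZ phiLm phiL0 phiLp]].
pose chi f := loc_frac coord (phi f).
have chiE : forall f, chi f = f * chi 1.
  apply: frac_linear_mulE => [f g | c f | f]; rewrite /chi.
  - by rewrite phiD (loc_frac_add coordK coordVK).
  - by rewrite -[_ * f]/(Wscale c f) phiZ (loc_frac_scale coordK coordVK).
  - by rewrite -[_ * f]/(W0 f) phiL0 (loc_frac_loc0 coordK coordVK).
have k0 : chi 1 != 0.
  apply: contra_neq (oner_neq0 {fraction {poly K}}) => k0.
  apply/(can_inj phiK)/(loc_frac_inj coordK coordVK).
  by rewrite -/(chi 1) -/(chi 0) [chi 0]chiE k0 !mulr0.
have Ep : r * chi 1 = (coord (Lp v0))%:F * fshift 1 (chi 1).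
  have := chiE (Wp r 1); rewrite {1}/chi phiLp (loc_frac_locp coordK coordVK) //.
  by rewrite /Wp fshift1 mulr1 => <-.
have Em : (pimu mu)%:F / fshift (-1) r * chi 1
    = (coord (Lm v0))%:F * fshift (-1) (chi 1).
  have := chiE (Wm mu r 1); rewrite {1}/chi phiLm (loc_frac_locm coordK coordVK) //.
  by rewrite /Wm fshift1 mulr1 => <-.
exists (pshift (-1) (coord (Lp v0))), (chi 1); split=> //.
  by apply/dvdpP; exists (coord (Lm v0)); apply: shift_factorization Ep Em.
by rewrite pshiftNK mulrA -Ep mulfK.
Qed.

Definition mulshift (K : fieldType) (m : {poly K}) (c : K) (p : {poly K}) :=
  m * pshift c p.

Lemma mulshift_is_linear (K : fieldType) (m : {poly K}) (c : K) :
  linear (mulshift m c).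
Proof.
by move=> k p q; rewrite /mulshift /pshift comp_polyD comp_polyZ mulrDr scalerAr.
Qed.

HB.instance Definition _ (K : fieldType) (m : {poly K}) (c : K) :=
  GRing.isLinear.Build K {poly K} {poly K} _ (mulshift m c) (mulshift_is_linear m c).

Lemma zact_mulshiftX (K : fieldType) (p q : {poly K}) :
  zact (mulshift 'X 0 : {linear {poly K} -> {poly K}}) p q = p * q.
Proof.
elim/poly_ind: p q => [|p c IHp] q; first by rewrite zact0r mul0r.
by rewrite zactDl zactC zactMX_L0 IHp /= /mulshift pshift0 mulrDl mul_polyC mulrA.
Qed.

Section PolynomialModel.
Variables (K : fieldType) (mu : K) (A b : {poly K}).
Hypothesis pimuE : pimu mu = b * A.
Local Notation F := {fraction {poly K}}.
Local Notation Lm := (mulshift b (-1) : {linear {poly K} -> {poly K}}).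
Local Notation L0 := (mulshift 'X 0 : {linear {poly K} -> {poly K}}).
Local Notation Lp := (mulshift (pshift 1 A) 1 : {linear {poly K} -> {poly K}}).

Lemma model_sl2 : is_sl2_rep Lm L0 Lp.
Proof.
have LpLm (u : {poly K}) : pshift 1 A * (pshift 1 b * u) - b * (A * u) = ('X * u) *+ 2.
  have Ab : A * b = pimu mu by rewrite pimuE mulrC.
  by rewrite !mulrA -pshiftM Ab pshift1_pimu pimuE; ring.
split=> v; rewrite /= /mulshift !pshift0 ?pshiftM ?pshiftX ?pshiftNK ?pshiftK.
- exact: LpLm.
- by rewrite polyC1; ring.
- by rewrite polyCN polyC1; ring.
Qed.

Lemma model_rank1 : poly_casimir_rank1 Lm L0 Lp.
Proof.
split; first exact: model_sl2.
  exists mu => v; rewrite /casimir_op /= /mulshift !pshift0 pshiftM !pshiftK.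
  by rewrite mulrA -pimuE /pimu -mul_polyC; ring.
by exists 1, id => p; rewrite /= zact_mulshiftX mulr1.
Qed.

Lemma model_iso (h r : F) : h != 0 -> r = (pshift 1 A)%:F * (fshift 1 h / h) ->
  iso_to_rat Lm L0 Lp mu r.
Proof.
move=> h0 Er.
have coordK : cancel (fun p => zact L0 p 1) id by move=> p; rewrite zact_mulshiftX mulr1.
have coordVK : cancel id (fun p => zact L0 p 1) by move=> p; rewrite zact_mulshiftX mulr1.
have [_ LpL0 LmL0] := model_sl2.
have A0 : A != 0 by apply: contra_neq (pimu_neq0 mu) => A0; rewrite pimuE A0 mulr0.
have hq0 : fshift 1 h / h != 0 by rewrite mulf_neq0 ?invr_eq0 ?fshift_eq0.
have r'0 : fshift (-1) r != 0.
  by rewrite fshift_eq0 Er; apply: mulf_neq0 hq0; rewrite tofrac_eq0 pshift_eq0.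
have Erh : r * h = (pshift 1 A)%:F * fshift 1 h by rewrite Er -mulrA (divfK h0).
have Erh' : fshift (-1) r * fshift (-1) h = A%:F * h.
  by rewrite -fshiftM Erh fshiftM fshift_tofrac pshiftK fshiftK.
have Ehm : (pimu mu)%:F / fshift (-1) r * h = b%:F * fshift (-1) h.
  apply: (mulIf r'0); rewrite mulrAC (divfK r'0) pimuE tofracM -mulrA -Erh'.
  by rewrite [fshift (-1) r * _]mulrC mulrA.
have [phi phiK] : exists phi : F -> loc L0, forall f, loc_frac id (phi f) = h * f.
  by exists (fun f => frac_loc L0 1 (h * f)) => f; rewrite frac_locK.
have phi_inj := loc_frac_inj coordK coordVK.
exists phi; split.
  exists (fun x => loc_frac id x / h) => [f | x] /=.
    by rewrite phiK [h * f]mulrC (mulfK h0).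
  by apply: phi_inj; rewrite phiK mulrC (divfK h0).
split=> [f g | c f | f | f | f]; apply: phi_inj; rewrite phiK.
- by rewrite (loc_frac_add coordK coordVK) !phiK mulrDr.
- by rewrite (loc_frac_scale coordK coordVK) phiK mulrCA.
- rewrite (loc_frac_locm coordK coordVK) // phiK /Wm /= /mulshift pshiftC mulr1.
  by rewrite (fshiftM (-1) h) mulrCA mulrA Ehm -mulrA.
- by rewrite (loc_frac_loc0 coordK coordVK) phiK mulrCA.
- rewrite (loc_frac_locp coordK coordVK) // phiK /Wp /= /mulshift pshiftC mulr1.
  by rewrite (fshiftM 1 h) mulrCA mulrA Erh -mulrA.
Qed.
End PolynomialModel.

Lemma rank1_of_polynomial_form (K : fieldType) (mu : K) (r : {fraction {poly K}}) :
  polynomial_form mu r ->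
  exists (V : lmodType K) (Lm L0 Lp : {linear V -> V}),
    poly_casimir_rank1 Lm L0 Lp /\ iso_to_rat Lm L0 Lp mu r.
Proof.
case=> A [h [/dvdpP[b pimuE] h0 Er]]; exists ({poly K} : lmodType K).
exists (mulshift b (-1)), (mulshift 'X 0), (mulshift (pshift 1 A) 1).
by split; [exact: model_rank1 pimuE | exact: model_iso h0 Er].
Qed.

Section ShiftQuotients.
Variable K : fieldType.
Local Notation F := {fraction {poly K}}.

Definition frac_factor (z : K) (t : int) : F :=
  ('X + (t%:~R - z)%:P)%:F / ('X - z%:P)%:F.

Definition factor_prod n (al : 'I_n -> K) (a : 'I_n -> int) : F :=
  \prod_(i < n) frac_factor (al i) (a i).

Definition is_factor_prod (f : F) :=
  exists n (al : 'I_n -> K) (a : 'I_n -> int), f = factor_prod al a.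

Definition is_shift_quotient (f : F) := exists2 h : F, h != 0 & f = fshift 1 h / h.

Lemma is_factor_prod1 : is_factor_prod 1.
Proof. by exists 0%N, (fun _ => 0), (fun _ => 0); rewrite /factor_prod big_ord0. Qed.

Lemma is_factor_prodM f g :
  is_factor_prod f -> is_factor_prod g -> is_factor_prod (f * g).
Proof.
case=> n [al [a ->]] [m [be [b ->]]].
exists (n + m)%N, (fun i => match split i with inl j => al j | inr j => be j end),
  (fun i => match split i with inl j => a j | inr j => b j end).
rewrite /factor_prod big_split_ord; congr (_ * _); apply: eq_bigr => i _.
  by rewrite (unsplitK (inl i : 'I_n + 'I_m)).
by rewrite (unsplitK (inr i : 'I_n + 'I_m)).
Qed.

Lemma is_factor_prod_factor z t : is_factor_prod (frac_factor z t).
Proof. by exists 1%N, (fun _ => z), (fun _ => t); rewrite /factor_prod big_ord1. Qed.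

Lemma frac_factorV z t : (frac_factor z t)^-1 = frac_factor (z - t%:~R) (- t).
Proof.
rewrite /frac_factor invf_div intrN.
by congr (_%:F / _%:F); rewrite -polyCN; congr (_ + _%:P); ring.
Qed.

Lemma is_factor_prodV f : is_factor_prod f -> is_factor_prod f^-1.
Proof.
case=> n [al [a ->]]; rewrite /factor_prod -prodfV.
exists n, (fun i => al i - (a i)%:~R), (fun i => - a i).
by apply: eq_bigr => i _; rewrite frac_factorV.
Qed.

Lemma is_shift_quotientM f g :
  is_shift_quotient f -> is_shift_quotient g -> is_shift_quotient (f * g).
Proof.
case=> h h0 -> [k k0 ->]; exists (h * k); first exact: mulf_neq0 h0 k0.
by rewrite fshiftM mulf_div.
Qed.

Lemma is_shift_quotientV f : is_shift_quotient f -> is_shift_quotient f^-1.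
Proof.
case=> h h0 ->; exists h^-1; first by rewrite invr_eq0.
by rewrite fshiftV invf_div invrK mulrC.
Qed.

Definition rising (z : K) m : {poly K} := \prod_(k < m) ('X + (k%:R - z)%:P).

Lemma rising_neq0 z m : rising z m != 0.
Proof. by apply/prodf_neq0 => k _; apply: monic_neq0 (monicXaddC _). Qed.

Lemma pshift_rising z m :
  pshift 1 (rising z m) * ('X - z%:P) = rising z m * ('X + (m%:R - z)%:P).
Proof.
elim: m => [|m IHm].
  by rewrite /rising !big_ord0 -polyC1 pshiftC polyC1 !mul1r sub0r polyCN.
rewrite /rising !big_ord_recr /= -/(rising z m) pshiftM pshift_XaddC mulrAC IHm.
by rewrite -!mulrA mulrSr addrAC.
Qed.

Lemma is_shift_quotient_factor z t : is_shift_quotient (frac_factor z t).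
Proof.
have pos w (m : nat) : is_shift_quotient (frac_factor w m).
  exists (rising w m)%:F; first by rewrite tofrac_eq0 rising_neq0.
  rewrite fshift_tofrac; apply/eq_tofrac_div; rewrite ?polyXsubC_eq0 ?rising_neq0 //.
  by rewrite pshift_rising mulrC.
case: t => [m | m]; first exact: pos.
have -> : frac_factor z (Negz m) = (frac_factor (z + m.+1%:R) m.+1)^-1.
  by rewrite frac_factorV addrK NegzE.
exact/is_shift_quotientV/pos.
Qed.

Lemma is_shift_quotient_factor_prod n (al : 'I_n -> K) (a : 'I_n -> int) :
  is_shift_quotient (factor_prod al a).
Proof.
apply: big_ind => [|f g|i _]; last exact: is_shift_quotient_factor.
- by exists 1; rewrite ?oner_neq0 // fshift1 divr1.
- exact: is_shift_quotientM.
Qed.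
End ShiftQuotients.

Section ClosedField.
Variable K : closedFieldType.
Local Notation F := {fraction {poly K}}.

Lemma is_factor_prod_poly (p : {poly K}) :
  p != 0 -> is_factor_prod (fshift 1 p%:F / p%:F).
Proof.
move=> p0; have [rs ->] := closed_field_poly_normal p.
have c0 : ((lead_coef p)%:P)%:F != 0 :> F by rewrite tofrac_eq0 polyC_eq0 lead_coef_eq0.
rewrite -mul_polyC tofracM fshiftM fshift_tofrac pshiftC -mulf_div divff // mul1r.
elim: rs => [|z rs IHrs].
  by rewrite big_nil tofrac1 fshift1 divr1; apply: is_factor_prod1.
rewrite big_cons tofracM fshiftM -mulf_div; apply: is_factor_prodM => //.
suff -> : fshift 1 ('X - z%:P)%:F / ('X - z%:P)%:F = frac_factor z 1.
  exact: is_factor_prod_factor.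
by rewrite fshift_tofrac -polyCN pshift_XaddC polyCN /frac_factor (addrC (- z)).
Qed.

Lemma is_factor_prod_shift_quotient (f : F) : is_shift_quotient f -> is_factor_prod f.
Proof.
case=> h h0 ->; have [p [q [q0 Eh]]] := frac_exists h.
have p0 : p != 0 by apply: contra_neq h0 => p0; rewrite Eh p0 tofrac0 mul0r.
have -> : fshift 1 h / h = (fshift 1 p%:F / p%:F) * (fshift 1 q%:F / q%:F)^-1.
  rewrite Eh (fshift_frac 1) // !fshift_tofrac !invf_div !mulf_div.
  by rewrite [(pshift 1 q)%:F * _]mulrC.
apply: is_factor_prodM; first exact: is_factor_prod_poly.
exact/is_factor_prodV/is_factor_prod_poly.
Qed.
End ClosedField.

Lemma polynomial_formE (K : closedFieldType) (mu : K) (r : {fraction {poly K}}) :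
  polynomial_form mu r <->
  (exists alpha_mu beta_mu : K,
      pimu mu = ('X - alpha_mu%:P) * ('X - beta_mu%:P) /\
      exists (gamma : K) (n : nat) (al : 'I_n -> K) (a : 'I_n -> int),
        gamma != 0 /\
        let P := factor_prod al a in
        [\/ r = (gamma%:P)%:F * (pimu mu \Po ('X + 1))%:F * P,
            r = (gamma%:P)%:F * (('X - alpha_mu%:P) \Po ('X + 1))%:F * P,
            r = (gamma%:P)%:F * (('X - beta_mu%:P) \Po ('X + 1))%:F * P
          | r = (gamma%:P)%:F * P]).
Proof.
have shiftE (g : K) T : (pshift 1 (g%:P * T))%:F = (g%:P)%:F * (T \Po ('X + 1))%:F.
  by rewrite pshiftM pshiftC pshift1E tofracM.
split=> [[A [h [dvdA h0 ->]]] | [al [be [pimuE [g [n [al' [a [g0 Er]]]]]]]]].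
  have [al [be pimuE]] := pimu_factor mu.
  have [g g0 shapeA] := dvdp_XsubC2 pimuE dvdA.
  have [n [al' [a ->]]] := is_factor_prod_shift_quotient (ex_intro2 _ _ h h0 erefl).
  exists al, be; split=> //; exists g, n, al', a; split=> //.
  case: shapeA => ->; rewrite ?shiftE ?pshiftC.
  - exact: Or41.
  - exact: Or42.
  - exact: Or43.
  - exact: Or44.
have [h h0 Ph] := is_shift_quotient_factor_prod al' a.
suff [A dvdA ->] : exists2 A, A %| pimu mu & r = (pshift 1 A)%:F * factor_prod al' a.
  by exists A, h; rewrite -Ph.
have dvdA T : T %| pimu mu -> g%:P * T %| pimu mu by rewrite mul_polyC dvdpZl.
case: Er => ->.
- by exists (g%:P * pimu mu); [apply/dvdA/dvdpp | rewrite shiftE].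
- by exists (g%:P * ('X - al%:P)); [rewrite dvdA // pimuE dvdp_mulIl | rewrite shiftE].
- by exists (g%:P * ('X - be%:P)); [rewrite dvdA // pimuE dvdp_mulIr | rewrite shiftE].
- by exists g%:P; [rewrite -[g%:P]mulr1 dvdA ?dvd1p | rewrite pshiftC].
Qed.

Theorem theorem9p3 (R : realType) (mu : R[i]) (r : {fraction {poly R[i]}})
    (hr : r != 0) :
  (exists (V : lmodType R[i]) (Lm L0 Lp : {linear V -> V}),
      poly_casimir_rank1 Lm L0 Lp /\ iso_to_rat Lm L0 Lp mu r)
  <->
  (exists alpha_mu beta_mu : R[i],
      pimu mu = ('X - alpha_mu%:P) * ('X - beta_mu%:P) /\
      exists (gamma : R[i]) (n : nat) (al : 'I_n -> R[i]) (a : 'I_n -> int),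
        gamma != 0 /\
        let P := \prod_(i < n)
                  (('X + ((a i)%:~R - al i)%:P)%:F / ('X - (al i)%:P)%:F) in
        [\/ r = (gamma%:P)%:F * (pimu mu \Po ('X + 1))%:F * P,
            r = (gamma%:P)%:F * (('X - alpha_mu%:P) \Po ('X + 1))%:F * P,
            r = (gamma%:P)%:F * (('X - beta_mu%:P) \Po ('X + 1))%:F * P
          | r = (gamma%:P)%:F * P]).
Proof.
apply: iff_trans (polynomial_formE mu r); split.
  by case=> V [Lm [L0 [Lp [rank1 iso]]]]; exact: polynomial_form_of_rank1 hr rank1 iso.
exact: rank1_of_polynomial_form.
Qed.
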